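(* Let $f\in C(\mathbb{R}^2)$ be $\kappa$-Lipschitz and $\mathbb{Z}^2$-periodic; let $v(\tau;c)$ solve $\dot v=f(v,\tau)$, $v(0)=c$, and let $\bar f=\lim_{k\to\infty}v(k;0)/k$. Then for all $\tau>0$ and $c\in\mathbb{R}$, $|v(\tau;c)-(c+\bar f\tau)|\le 1+2\|f\|_\infty$. Moreover, if $f(r,\tau)$ is independent of $\tau$, then $|v(\tau;c)-(c+\bar f\tau)|\le 1$. *)

From Stdlib Require Import Reals.
From Coquelicot Require Import Coquelicot.
Open Scope R_scope.

Definition lipschitz2 (kappa : R) (f : R -> R -> R) : Prop :=
  forall r t r' t', Rabs (f r t - f r' t') <= kappa * sqrt ((r - r')^2 + (t - t')^2).

Definition Z2_periodic (f : R -> R -> R) : Prop :=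
  forall r t, f (r + 1) t = f r t /\ f r (t + 1) = f r t.

Definition is_flow (f : R -> R -> R) (v : R -> R -> R) : Prop :=
  forall c, v c 0 = c /\ forall tau, is_derive (v c) tau (f (v c tau) tau).

Definition fbar (v : R -> R -> R) : R :=
  real (Lim_seq (fun k : nat => v 0 (INR k) / INR k)).

From Stdlib Require Import Reals Lra Lia.
From Coquelicot Require Import Coquelicot.
Open Scope R_scope.

(* Uniqueness of solutions makes every time-t map c |-> v(c, t) a nondecreasing
   lift of a circle map, v(c + 1, t) = v(c, t) + 1, so its displacement
   v(c, t) - c varies by at most 1 in c.  If f is T-periodic in time, the
   time-kT map is the k-th iterate of the time-T map, hence the displacements
   d_k(x) = v(x, kT) - x satisfy |d_(m+n)(x) - d_m(x) - d_n(y)| <= 1.  Comparing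
   d_p(x)/p and d_q(y)/q with d_(pq)(x)/(pq) shows that d_k(x)/k converges to
   some rho independent of x, with |d_k(x) - k rho| <= 1.  With T = 1 this is
   the bound at integer times, and the fractional part of tau costs at most
   |f|_oo for the flow plus |fbar| <= |f|_oo for the line.  When f is
   autonomous every tau is a period, and almost additivity with step tau,
   together with the bounded deviation from the line, gives the bound 1. *)

Lemma le_of_nat_mul_le (x y C : R) :
  (forall n : nat, (0 < n)%nat -> INR n * x <= INR n * y + C) -> x <= y.
Proof.
  intros H; apply Rnot_lt_le; intros Hyx.
  destruct (nfloor_ex (Rabs C / (x - y))) as [n [_ Hn]].
  { apply Rdiv_le_0_compat; [apply Rabs_pos | lra]. }
  apply Rlt_div_l in Hn; [|lra].
  specialize (H (S n) ltac:(lia)); rewrite S_INR in H.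
  pose proof (Rle_abs C); lra.
Qed.

Section AlmostAdditive.

Variables (X : Type) (a : X -> nat -> R).
Hypothesis a_0 : forall x, a x 0 = 0.
Hypothesis a_almost_add : forall x y m n, Rabs (a x (m + n) - a x m - a y n) <= 1.

Lemma almost_additive_mul x y m n : Rabs (a x (m * n) - INR m * a y n) <= INR m.
Proof.
  induction m as [|m IHm].
  - rewrite Nat.mul_0_l, a_0; simpl; rewrite Rmult_0_l, Rminus_0_r, Rabs_R0; lra.
  - rewrite Nat.mul_succ_l, S_INR.
    pose proof (a_almost_add x y (m * n) n) as Hstep.
    apply Rabs_le_between in Hstep; apply Rabs_le_between in IHm.
    apply Rabs_le; lra.
Qed.

Lemma almost_additive_quotient_close y z m n : (0 < m)%nat -> (0 < n)%nat ->
  Rabs (a y n / INR n - a z m / INR m) <= / INR n + / INR m.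
Proof.
  intros Hm Hn.
  assert (HmR : 0 < INR m) by (apply lt_0_INR; lia).
  assert (HnR : 0 < INR n) by (apply lt_0_INR; lia).
  pose proof (almost_additive_mul y y m n) as Hy.
  pose proof (almost_additive_mul y z n m) as Hz.
  rewrite Nat.mul_comm in Hz.
  replace (a y n / INR n - a z m / INR m)
    with (((a y (m * n) - INR n * a z m) - (a y (m * n) - INR m * a y n)) / (INR m * INR n))
    by (field; lra).
  unfold Rdiv; rewrite Rabs_mult, Rabs_inv, (Rabs_right (INR m * INR n)) by nra.
  apply (Rmult_le_reg_r (INR m * INR n)); [nra|].
  rewrite Rmult_assoc, Rinv_l, Rmult_1_r by nra.
  replace ((/ INR n + / INR m) * (INR m * INR n)) with (INR m + INR n) by (field; lra).
  eapply Rle_trans; [apply Rabs_triang|]; rewrite Rabs_Ropp; lra.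
Qed.

Variable x0 : X.

Let rho := real (Lim_seq (fun k => a x0 k / INR k)).

Lemma almost_additive_is_lim : is_lim_seq (fun k => a x0 k / INR k) rho.
Proof.
  apply Lim_seq_correct', ex_lim_seq_cauchy_corr.
  intros [eps Heps]; simpl.
  destruct (archimed_cor1 (eps / 2)) as [N [HN HN0]]; [lra|].
  exists N; intros p q Hp Hq.
  eapply Rle_lt_trans; [apply almost_additive_quotient_close; lia|].
  assert (/ INR p <= / INR N) by (apply Rinv_le_contravar; [apply lt_0_INR | apply le_INR]; lia).
  assert (/ INR q <= / INR N) by (apply Rinv_le_contravar; [apply lt_0_INR | apply le_INR]; lia).
  lra.
Qed.

Lemma almost_additive_rotation_bound y n : Rabs (a y n - INR n * rho) <= 1.
Proof.
  destruct n as [|n'].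
  { rewrite a_0; simpl; rewrite Rmult_0_l, Rminus_0_r, Rabs_R0; lra. }
  set (n := S n').
  assert (Hn0 : (0 < n)%nat) by (unfold n; lia).
  assert (HnR : 0 < INR n) by (apply lt_0_INR; exact Hn0).
  assert (Hlim : Rabs (a y n / INR n - rho) <= / INR n).
  { change (Rbar_le (Rabs (a y n / INR n - rho)) (/ INR n)).
    rewrite <- (Rplus_0_r (/ INR n)).
    apply (is_lim_seq_le_loc (fun k => Rabs (a y n / INR n - a x0 k / INR k))
                             (fun k => / INR n + / INR k)).
    - exists 1%nat; intros k Hk; apply almost_additive_quotient_close; lia.
    - apply (is_lim_seq_abs _ (Finite (a y n / INR n - rho))).
      apply is_lim_seq_minus'; [apply is_lim_seq_const | apply almost_additive_is_lim].
    - apply is_lim_seq_plus'; [apply is_lim_seq_const|].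
      replace (Finite 0) with (Rbar_inv p_infty) by reflexivity.
      apply is_lim_seq_inv; [apply is_lim_seq_INR | discriminate]. }
  replace (a y n - INR n * rho) with (INR n * (a y n / INR n - rho)) by (field; lra).
  rewrite Rabs_mult, Rabs_right by lra.
  apply (Rmult_le_compat_l (INR n)) in Hlim; [|lra].
  rewrite Rinv_r in Hlim by lra; exact Hlim.
Qed.

End AlmostAdditive.

Lemma is_derive_eq (g : R -> R) x l l' : is_derive g x l -> l = l' -> is_derive g x l'.
Proof. intros H ->; exact H. Qed.

Lemma nonincreasing_of_derive_nonpos (g dg : R -> R) :
  (forall x, is_derive g x (dg x)) -> (forall x, dg x <= 0) ->
  forall a b, a <= b -> g b <= g a.
Proof.
  intros Hg Hneg a b Hab.
  destruct (MVT_gen g a b dg) as [c [_ Hc]].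
  - intros x _; apply Hg.
  - intros x _; apply continuity_pt_filterlim, (ex_derive_continuous g); eexists; apply Hg.
  - specialize (Hneg c); nra.
Qed.

Lemma gronwall (e de : R -> R) (L : R) :
  (forall s, is_derive e s (de s)) -> (forall s, de s <= L * e s) ->
  forall t0 t, t0 <= t -> e t <= e t0 * exp (L * (t - t0)).
Proof.
  intros He Hde t0 t Ht.
  set (h := fun s => e s * exp (- L * s)).
  assert (Hh : forall s, is_derive h s ((de s - L * e s) * exp (- L * s))).
  { intros s; unfold h; eapply is_derive_eq.
    - apply (is_derive_mult e (fun s => exp (- L * s))); [apply He | | intros; apply Rmult_comm].
      apply (is_derive_comp exp (fun s => - L * s)); [apply is_derive_exp|].
      apply (is_derive_scal (fun s => s)), is_derive_id.
    - unfold plus, mult, scal, one; simpl; unfold mult; simpl; ring. }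
  assert (Hdec : h t <= h t0).
  { apply (nonincreasing_of_derive_nonpos h _ Hh); [|exact Ht].
    intros s; pose proof (exp_pos (- L * s)); specialize (Hde s); nra. }
  unfold h in Hdec.
  replace (L * (t - t0)) with (L * t + - L * t0) by ring.
  rewrite exp_plus.
  apply (Rmult_le_compat_r (exp (L * t))) in Hdec; [|left; apply exp_pos].
  rewrite Rmult_assoc, <- exp_plus in Hdec.
  replace (- L * t + L * t) with 0 in Hdec by ring.
  rewrite exp_0, Rmult_1_r in Hdec; lra.
Qed.

Definition lipschitz_in_space (K : R) (f : R -> R -> R) : Prop :=
  forall r r' t, Rabs (f r t - f r' t) <= K * Rabs (r - r').

Definition solves (f : R -> R -> R) (w : R -> R) : Prop :=
  forall t, is_derive w t (f (w t) t).

Lemma solves_unique_forward f K w1 w2 t0 t : lipschitz_in_space K f ->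
  solves f w1 -> solves f w2 -> t0 <= t -> w1 t0 = w2 t0 -> w1 t = w2 t.
Proof.
  intros Hlip H1 H2 Ht E.
  set (e := fun s => (w1 s - w2 s) ^ 2).
  assert (He : forall s, is_derive e s (2 * (w1 s - w2 s) * (f (w1 s) s - f (w2 s) s))).
  { intros s; unfold e; eapply is_derive_eq.
    - apply (is_derive_pow (fun s => w1 s - w2 s) 2), (is_derive_minus w1 w2); auto.
    - unfold minus, plus, opp; simpl; ring. }
  assert (Hde : forall s, 2 * (w1 s - w2 s) * (f (w1 s) s - f (w2 s) s) <= 2 * K * e s).
  { intros s; unfold e.
    pose proof (Hlip (w1 s) (w2 s) s) as Hl.
    pose proof (Rle_abs ((w1 s - w2 s) * (f (w1 s) s - f (w2 s) s))) as Habs.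
    rewrite Rabs_mult in Habs.
    apply (Rmult_le_compat_l (Rabs (w1 s - w2 s))) in Hl; [|apply Rabs_pos].
    assert (Hsq : Rabs (w1 s - w2 s) * Rabs (w1 s - w2 s) = (w1 s - w2 s) ^ 2)
      by (rewrite <- Rabs_mult, Rabs_right; [ring | apply Rle_ge, Rle_0_sqr]).
    replace (Rabs (w1 s - w2 s) * (K * Rabs (w1 s - w2 s))) with (K * (w1 s - w2 s) ^ 2)
      in Hl by (rewrite <- Hsq; ring).
    lra. }
  pose proof (gronwall e _ (2 * K) He Hde t0 t Ht) as Hg.
  unfold e in Hg; rewrite E, Rminus_diag, pow_ne_zero, Rmult_0_l in Hg by lia.
  pose proof (pow2_ge_0 (w1 t - w2 t)); nra.
Qed.

Lemma solves_time_reversal f w : solves f w ->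
  solves (fun r s => - f r (- s)) (fun s => w (- s)).
Proof.
  intros Hw s; cbv beta; eapply is_derive_eq.
  - apply (is_derive_comp w Ropp); [apply Hw|].
    exact (is_derive_opp _ s _ (@is_derive_id R_AbsRing s)).
  - unfold scal, opp, one; simpl; unfold mult; simpl; ring.
Qed.

Lemma solves_unique f K w1 w2 t0 t : lipschitz_in_space K f ->
  solves f w1 -> solves f w2 -> w1 t0 = w2 t0 -> w1 t = w2 t.
Proof.
  intros Hlip H1 H2 E.
  destruct (Rle_lt_dec t0 t) as [Ht | Ht].
  - exact (solves_unique_forward f K w1 w2 t0 t Hlip H1 H2 Ht E).
  - assert (Hlip' : lipschitz_in_space K (fun r s => - f r (- s))).
    { intros r r' s; rewrite <- Rabs_Ropp.
      replace (- _) with (f r (- s) - f r' (- s)) by ring; apply Hlip. }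
    rewrite <- (Ropp_involutive t).
    apply (solves_unique_forward (fun r s => - f r (- s)) K
             (fun s => w1 (- s)) (fun s => w2 (- s)) (- t0));
      [exact Hlip' | apply solves_time_reversal; auto .. | lra |].
    rewrite Ropp_involutive; exact E.
Qed.

Lemma solves_order_preserving f K w1 w2 t0 t : lipschitz_in_space K f ->
  solves f w1 -> solves f w2 -> w1 t0 <= w2 t0 -> w1 t <= w2 t.
Proof.
  intros Hlip H1 H2 E; apply Rnot_lt_le; intros Hlt.
  assert (Hc : continuity (fun s => w1 s - w2 s)).
  { intros s; apply continuity_pt_filterlim, (ex_derive_continuous (fun s => w1 s - w2 s)).
    eexists; apply (is_derive_minus w1 w2); auto. }
  destruct (IVT_gen (fun s => w1 s - w2 s) t0 t 0 Hc) as [x [_ Hx]].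
  { split; [apply Rle_trans with (w1 t0 - w2 t0); [apply Rmin_l | lra]
           | apply Rle_trans with (w1 t - w2 t); [lra | apply Rmax_r]]. }
  assert (w1 t = w2 t) by (apply (solves_unique f K w1 w2 x t); auto; lra).
  lra.
Qed.

Section Lift.

Variable g : R -> R.
Hypothesis g_mono : forall x y, x <= y -> g x <= g y.
Hypothesis g_add1 : forall x, g (x + 1) = g x + 1.

Lemma lift_add_nat x n : g (x + INR n) = g x + INR n.
Proof.
  induction n as [|n IHn].
  - simpl; rewrite !Rplus_0_r; reflexivity.
  - rewrite S_INR, <- Rplus_assoc, g_add1, IHn; ring.
Qed.

Lemma lift_displacement_close x y : Rabs ((g y - y) - (g x - x)) <= 1.
Proof.
  assert (Hle : forall x y, x <= y -> Rabs ((g y - y) - (g x - x)) <= 1).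
  { intros x' y' Hxy.
    destruct (nfloor_ex (y' - x')) as [n Hn]; [lra|].
    pose proof (g_mono (x' + INR n) y' ltac:(lra)).
    pose proof (g_mono y' (x' + INR n + 1) ltac:(lra)).
    rewrite g_add1, lift_add_nat in *.
    apply Rabs_le; lra. }
  destruct (Rle_lt_dec x y); [auto|].
  rewrite Rabs_minus_sym; apply Hle; lra.
Qed.

End Lift.

Definition displacement (v : R -> R -> R) (T x : R) (k : nat) : R :=
  v x (INR k * T) - x.

Section Flow.

Variables (f v : R -> R -> R) (K : R).
Hypothesis f_lip : lipschitz_in_space K f.
Hypothesis v_flow : is_flow f v.

Lemma flow_solves c : solves f (v c).
Proof. exact (proj2 (v_flow c)). Qed.

Lemma flow_eq_solution w c : solves f w -> w 0 = c -> forall t, w t = v c t.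
Proof.
  intros Hw Hw0 t; apply (solves_unique f K w (v c) 0 t f_lip Hw (flow_solves c)).
  rewrite (proj1 (v_flow c)); exact Hw0.
Qed.

Lemma flow_le c1 c2 t : c1 <= c2 -> v c1 t <= v c2 t.
Proof.
  intros Hc.
  apply (solves_order_preserving f K (v c1) (v c2) 0 t f_lip (flow_solves c1) (flow_solves c2)).
  rewrite (proj1 (v_flow c1)), (proj1 (v_flow c2)); exact Hc.
Qed.

Lemma flow_time_shift T : (forall r t, f r (t + T) = f r t) ->
  forall c t, v c (t + T) = v (v c T) t.
Proof.
  intros HT c t.
  apply (flow_eq_solution (fun s => v c (s + T))); [intros s | now rewrite Rplus_0_l].
  eapply is_derive_eq.
  - apply (is_derive_comp (v c) (fun s => s + T)); [apply flow_solves|].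
    apply (is_derive_plus (fun s => s) (fun _ => T)); [apply is_derive_id | apply is_derive_const].
  - rewrite HT; unfold plus, zero, one, scal; simpl; unfold mult; simpl; ring.
Qed.

Lemma flow_displacement_le_mul M : (forall r t, Rabs (f r t) <= M) ->
  forall y s, 0 <= s -> Rabs (v y s - y) <= M * s.
Proof.
  intros HM y s Hs.
  destruct (MVT_gen (v y) 0 s (fun t => f (v y t) t)) as [c [_ Hc]].
  - intros; apply flow_solves.
  - intros t _; apply continuity_pt_filterlim, (ex_derive_continuous (v y)).
    eexists; apply flow_solves.
  - rewrite (proj1 (v_flow y)), Rminus_0_r in Hc.
    rewrite Hc, Rabs_mult, (Rabs_right s) by lra.
    apply Rmult_le_compat_r; auto.
Qed.

Hypothesis f_space_periodic : forall r t, f (r + 1) t = f r t.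

Lemma flow_add1 c t : v (c + 1) t = v c t + 1.
Proof.
  symmetry; apply (flow_eq_solution (fun s => v c s + 1));
    [intros s | now rewrite (proj1 (v_flow c))].
  eapply is_derive_eq.
  - apply (is_derive_plus (v c) (fun _ => 1)); [apply flow_solves | apply is_derive_const].
  - rewrite f_space_periodic; unfold plus, zero; simpl; ring.
Qed.

Lemma flow_displacement_close t x y : Rabs ((v y t - y) - (v x t - x)) <= 1.
Proof.
  apply (lift_displacement_close (fun c => v c t)).
  - intros; apply flow_le; assumption.
  - intros c; apply flow_add1.
Qed.

Lemma flow_displacement_bounded_on_unit :
  exists B, forall y s, 0 <= s <= 1 -> Rabs (v y s - y) <= B.
Proof.
  destruct (continuity_ab_maj (fun s => Rabs (v 0 s)) 0 1) as [smax [Hmax _]]; [lra| |].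
  - intros s _; apply continuity_pt_filterlim.
    apply (continuous_comp (v 0) Rabs); [|apply continuous_Rabs].
    apply (ex_derive_continuous (v 0)); eexists; apply flow_solves.
  - exists (Rabs (v 0 smax) + 1); intros y s Hs.
    pose proof (flow_displacement_close s 0 y) as Hclose.
    specialize (Hmax s Hs); simpl in Hmax.
    pose proof (Rabs_triang_inv (v y s - y) (v 0 s - 0)); rewrite Rminus_0_r in *; lra.
Qed.

Section TimePeriodic.

Variable T : R.
Hypothesis f_time_periodic : forall r t, f r (t + T) = f r t.

Lemma flow_time_shift_nat k c t : v c (t + INR k * T) = v (v c (INR k * T)) t.
Proof.
  induction k as [|k IHk] in c, t |- *.
  - simpl; rewrite Rmult_0_l, Rplus_0_r, (proj1 (v_flow c)); reflexivity.
  - rewrite S_INR.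
    replace (t + (INR k + 1) * T) with ((t + T) + INR k * T) by ring.
    replace ((INR k + 1) * T) with (T + INR k * T) by ring.
    rewrite IHk, flow_time_shift, <- IHk; auto.
Qed.

Lemma displacement_0 x : displacement v T x 0 = 0.
Proof. unfold displacement; simpl; rewrite Rmult_0_l, (proj1 (v_flow x)); ring. Qed.

Lemma displacement_almost_additive x y m n :
  Rabs (displacement v T x (m + n) - displacement v T x m - displacement v T y n) <= 1.
Proof.
  unfold displacement.
  rewrite plus_INR, Rmult_plus_distr_r, Rplus_comm, flow_time_shift_nat.
  replace (v (v x (INR m * T)) (INR n * T) - x - (v x (INR m * T) - x) - (v y (INR n * T) - y))
    with ((v (v x (INR m * T)) (INR n * T) - v x (INR m * T)) - (v y (INR n * T) - y)) by ring.
  rewrite Rabs_minus_sym; apply flow_displacement_close.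
Qed.

End TimePeriodic.

Hypothesis f_time_periodic : forall r t, f r (t + 1) = f r t.

Lemma flow_rotation_bound x n : Rabs (v x (INR n) - x - INR n * fbar v) <= 1.
Proof.
  pose proof (almost_additive_rotation_bound R (displacement v 1) (displacement_0 1)
    (displacement_almost_additive 1 f_time_periodic) 0 x n) as Hrot.
  unfold displacement in Hrot; rewrite Rmult_1_r in Hrot.
  unfold fbar; erewrite Lim_seq_ext; [exact Hrot|].
  intros k; unfold displacement; rewrite Rmult_1_r, Rminus_0_r; reflexivity.
Qed.

Lemma flow_linear_deviation B : (forall y s, 0 <= s < 1 -> Rabs (v y s - y) <= B) ->
  forall x t, 0 <= t -> Rabs (v x t - (x + fbar v * t)) <= 1 + B + Rabs (fbar v).
Proof.
  intros HB x t Ht.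
  destruct (nfloor_ex t Ht) as [n Hn].
  set (s := t - INR n).
  assert (Hs : 0 <= s < 1) by (unfold s; lra).
  replace t with (s + INR n * 1) by (unfold s; ring).
  rewrite (flow_time_shift_nat 1 f_time_periodic n x s), Rmult_1_r.
  pose proof (HB (v x (INR n)) s Hs).
  pose proof (flow_rotation_bound x n).
  assert (Rabs (fbar v * s) <= Rabs (fbar v))
    by (rewrite Rabs_mult, (Rabs_right s) by lra; pose proof (Rabs_pos (fbar v)); nra).
  replace (v (v x (INR n)) s - (x + fbar v * (s + INR n)))
    with ((v (v x (INR n)) s - v x (INR n)) + (v x (INR n) - x - INR n * fbar v) - fbar v * s)
    by ring.
  eapply Rle_trans; [apply Rabs_triang|]; rewrite Rabs_Ropp.
  eapply Rle_trans; [apply Rplus_le_compat_r, Rabs_triang|]; lra.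
Qed.

Lemma fbar_abs_le M : (forall r t, Rabs (f r t) <= M) -> Rabs (fbar v) <= M.
Proof.
  intros HM; apply (le_of_nat_mul_le _ _ 1); intros n _.
  pose proof (flow_displacement_le_mul M HM 0 (INR n) (pos_INR n)) as Hle.
  pose proof (flow_rotation_bound 0 n) as Hrot.
  pose proof (Rabs_triang_inv (INR n * fbar v) (v 0 (INR n) - 0)) as Htri.
  rewrite Rabs_mult, (Rabs_right (INR n)) in Htri by (apply Rle_ge, pos_INR).
  replace (INR n * fbar v - (v 0 (INR n) - 0)) with (- (v 0 (INR n) - 0 - INR n * fbar v))
    in Htri by ring.
  rewrite Rabs_Ropp in Htri; lra.
Qed.

Lemma autonomous_flow_rotation_bound : (forall r t t', f r t = f r t') ->
  forall tau c, 0 <= tau -> Rabs (v c tau - (c + fbar v * tau)) <= 1.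
Proof.
  intros Haut tau c Htau.
  destruct flow_displacement_bounded_on_unit as [B HB].
  assert (Htau_periodic : forall r t, f r (t + tau) = f r t) by (intros; apply Haut).
  apply (le_of_nat_mul_le _ _ (1 + B + Rabs (fbar v))); intros k _.
  pose proof (almost_additive_mul R (displacement v tau) (displacement_0 tau)
    (displacement_almost_additive tau Htau_periodic) c c k 1) as Hmul.
  pose proof (flow_linear_deviation B ltac:(intros; apply HB; lra) c (INR k * tau)
    ltac:(apply Rmult_le_pos; [apply pos_INR | exact Htau])) as Hdev.
  unfold displacement in Hmul; rewrite Nat.mul_1_r, Rmult_1_l in Hmul.
  rewrite Rmult_1_r, <- (Rabs_right (INR k)) at 1 by (apply Rle_ge, pos_INR).
  rewrite <- Rabs_mult.
  replace (INR k * (v c tau - (c + fbar v * tau)))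
    with ((v c (INR k * tau) - (c + fbar v * (INR k * tau)))
          - (v c (INR k * tau) - c - INR k * (v c tau - c)))
    by ring.
  eapply Rle_trans; [apply Rabs_triang|]; rewrite Rabs_Ropp; lra.
Qed.

End Flow.

Lemma lipschitz2_in_space kappa f : lipschitz2 kappa f -> lipschitz_in_space kappa f.
Proof.
  intros Hlip r r' t.
  specialize (Hlip r t r' t).
  replace ((r - r') ^ 2 + (t - t) ^ 2) with (Rsqr (r - r')) in Hlip by (unfold Rsqr; ring).
  rewrite sqrt_Rsqr_abs in Hlip; exact Hlip.
Qed.

Theorem lemma2p4 (f : R -> R -> R) (kappa : R) (v : R -> R -> R)
  (Hcont : forall r t, continuity_2d_pt f r t)
  (Hlip : lipschitz2 kappa f)
  (Hper : Z2_periodic f)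
  (Hv : is_flow f v) :
  (forall M : R, (forall r t, Rabs (f r t) <= M) ->
     forall tau c, 0 < tau -> Rabs (v c tau - (c + fbar v * tau)) <= 1 + 2 * M)
  /\ ((forall r t t', f r t = f r t') ->
     forall tau c, 0 < tau -> Rabs (v c tau - (c + fbar v * tau)) <= 1).
Proof.
  pose proof (lipschitz2_in_space kappa f Hlip) as HK.
  assert (Hspace : forall r t, f (r + 1) t = f r t) by (intros; apply Hper).
  assert (Htime : forall r t, f r (t + 1) = f r t) by (intros; apply Hper).
  split.
  - intros M HM tau c Htau.
    assert (HB : forall y s, 0 <= s < 1 -> Rabs (v y s - y) <= M).
    { intros y s Hs.
      pose proof (flow_displacement_le_mul f v Hv M HM y s ltac:(lra)).
      pose proof (Rle_trans _ _ _ (Rabs_pos _) (HM 0 0)); nra. }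
    pose proof (fbar_abs_le f v kappa HK Hv Hspace Htime M HM).
    pose proof (flow_linear_deviation f v kappa HK Hv Hspace Htime M HB c tau ltac:(lra)).
    lra.
  - intros Haut tau c Htau.
    apply (autonomous_flow_rotation_bound f v kappa HK Hv Hspace Htime Haut); lra.
Qed.
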